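(* Let $q\ge 2$ and $L\ge 2$ be integers and let $\mathcal{C}\subseteq[q]^n$ be a $q$-ary code. Suppose that for every subset $\{c_1,\dots,c_L\}$ of $L$ distinct codewords of $\mathcal{C}$, the average pairwise relative Hamming distance $\binom{L}{2}^{-1}\sum_{1\le i<j\le L}\delta(c_i,c_j)$ is at least $\delta$. Then $\mathcal{C}$ is $(J_q(\delta-\delta/L),\,L-1)$-list decodable.
   Context: $[q]=\{0,1,\dots,q-1\}$. For $x,y\in[q]^n$, $\delta(x,y)$ is the fraction of coordinates $i$ with $x_i\ne y_i$. A code $\mathcal{C}\subseteq[q]^n$ is $(\rho,\ell)$-list decodable if for every $y\in[q]^n$ the number of $c\in\mathcal{C}$ with $\delta(c,y)<\rho$ is at most $\ell$. The Johnson radius function $J_q:[0,1-1/q]\to[0,1]$ is $J_q(x)=\frac{q-1}{q}\Big(1-\sqrt{1-\frac{qx}{q-1}}\Big)$. *)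

From HB Require Import structures.
From mathcomp Require Import all_boot all_order all_algebra.
Set Implicit Arguments. Unset Strict Implicit. Unset Printing Implicit Defensive.
Import Order.TTheory GRing.Theory Num.Theory.
Local Open Scope ring_scope.

Definition word (q n : nat) := {ffun 'I_n -> 'I_q}.

Definition reldist (R : numFieldType) (q n : nat) (x y : word q n) : R :=
  (#|[set i : 'I_n | x i != y i]|)%:R / n%:R.

Definition list_decodable (R : numFieldType) (q n : nat)
  (C : {set word q n}) (rho : R) (ell : nat) : Prop :=
  forall y : word q n, (#|[set c in C | (reldist R c y < rho)%R]| <= ell)%N.

Definition Johnson (R : rcfType) (q : nat) (x : R) : R :=
  (q%:R - 1) / q%:R * (1 - Num.sqrt (1 - q%:R * x / (q%:R - 1))).

From mathcomp Require Import all_boot all_order all_algebra.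
From mathcomp Require Import lra ring zify.
Import Order.TTheory GRing.Theory Num.Theory.
Set Implicit Arguments. Unset Strict Implicit. Unset Printing Implicit Defensive.
Local Open Scope ring_scope.

(* Suppose some ball of radius J := J_q(delta - delta/L) around y holds L codewords
   c_1..c_L, and let e < J be their mean relative distance to y.  In each coordinate,
   the counts m_a of the symbol a among the c_i satisfy sum m_a^2 >= sum (2 w_a m_a - w_a^2)
   for any weights w; the weights L(1 - e) on y's symbol and L e/(q - 1) elsewhere bound
   the number of disagreeing ordered pairs by the tangent at e of L^2 G(d/L), where
   G(e) = 2e - q e^2/(q - 1) is the inverse of J_q and d counts the c_i differing from y.
   Summing over coordinates, the pairwise distances add up to at most L^2 G(e), whereas
   the hypothesis makes them at least delta L (L - 1).  Hence G(e) >= delta - delta/L,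
   which contradicts e < J. *)

Definition johnson_inv (R : fieldType) (q : nat) (e : R) : R :=
  2 * e - q%:R * e ^+ 2 / (q%:R - 1).

Lemma johnson_inv_lt (R : rcfType) (q : nat) (x e : R) : (1 < q)%N ->
  e < Johnson q x -> johnson_inv q e < x.
Proof.
move=> hq; have hq1 : 0 < q%:R - 1 :> R by rewrite subr_gt0 ltr1n.
have hq0 : q%:R != 0 :> R by rewrite pnatr_eq0; lia.
set p := q%:R / (q%:R - 1) : R.
have hp : 0 < p by rewrite divr_gt0 // ltr0n; lia.
have -> : Johnson q x = (1 - Num.sqrt (1 - p * x)) / p.
  by rewrite /Johnson /p [q%:R * x / _]mulrAC; field; rewrite hq0 gt_eqF.
have -> : johnson_inv q e = (1 - (1 - p * e) ^+ 2) / p.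
  by rewrite /johnson_inv /p; field; rewrite hq0 gt_eqF.
rewrite ltr_pdivlMr // ltr_pdivrMr // => hpe.
set s := Num.sqrt _ in hpe.
(* [s ^+ 2 >= 1 - p * x] also when the radicand is negative and [s = 0] *)
have hs2 : 1 - p * x <= s ^+ 2.
  case: (lerP 0 (1 - p * x)) => [hpos|hneg]; first by rewrite sqr_sqrtr.
  by apply: le_trans (ltW hneg) (sqr_ge0 _).
have hs0 : 0 <= s := sqrtr_ge0 _.
nra.
Qed.

Lemma reldistE (R : numFieldType) (q n : nat) (x y : word q n) :
  reldist R x y = (\sum_k (x k != y k)%:R) / n%:R.
Proof.
rewrite /reldist -sum1_card natr_sum big_mkcond /=; congr (_ / _).
by apply: eq_bigr => k _; rewrite inE; case: (_ != _).
Qed.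

Lemma reldistC (R : numFieldType) (q n : nat) (x y : word q n) :
  reldist R x y = reldist R y x.
Proof. by rewrite !reldistE; congr (_ / _); apply: eq_bigr => k _; rewrite eq_sym. Qed.

Lemma reldistxx (R : numFieldType) (q n : nat) (x : word q n) : reldist R x x = 0.
Proof. by rewrite reldistE big1 ?mul0r // => k _; rewrite eqxx. Qed.

Lemma sum_ord_pairs (R : nmodType) (L : nat) (f : 'I_L -> 'I_L -> R) :
  (forall i j, f i j = f j i) -> (forall i, f i i = 0) ->
  \sum_i \sum_j f i j = (\sum_(i < L) \sum_(j < L | (i < j)%N) f i j) *+ 2.
Proof.
move=> fC f0.
have split_row i :
    \sum_j f i j = \sum_(j < L | (i < j)%N) f i j + \sum_(j < L | (j < i)%N) f j i.
  rewrite (bigID (fun j : 'I_L => (i < j)%N)) /=; congr (_ + _).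
  rewrite (bigID (fun j => j == i)) /= big1 ?add0r => [|j /andP[_ /eqP->]]; last exact: f0.
  apply: eq_big => [j|j _]; last exact: fC.
  by rewrite andbC -leqNgt -ltn_neqAle.
rewrite (eq_bigr _ (fun i _ => split_row i)) big_split /=.
by rewrite (exchange_big_dep predT) //= mulr2n.
Qed.

Lemma collisions_ge (R : realFieldType) (I T : finType) (f : I -> T) (w : T -> R) :
  2 * \sum_i w (f i) - \sum_a w a ^+ 2 <= \sum_i \sum_j (f i == f j)%:R.
Proof.
pose m a := \sum_i (f i == a)%:R : R.
have sum_comp (F : T -> R) : \sum_i F (f i) = \sum_a F a * m a.
  under [RHS]eq_bigr => a _ do rewrite mulr_sumr.
  rewrite exchange_big /=; apply: eq_bigr => i _.
  rewrite (bigD1 (f i)) //= eqxx mulr1 big1 ?addr0 // => a.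
  by rewrite eq_sym => /negbTE->; rewrite mulr0.
have -> : \sum_i \sum_j (f i == f j)%:R = \sum_a m a * m a.
  by rewrite -sum_comp; apply: eq_bigr => i _; apply: eq_bigr => j _; rewrite eq_sym.
rewrite sum_comp mulr_sumr -sumrB; apply: ler_sum => a _.
by have := sqr_ge0 (m a - w a); nra.
Qed.

Lemma disagreements_le_tangent (R : realFieldType) (I : finType) (q : nat)
    (f : I -> 'I_q) (y0 : 'I_q) (e : R) : (1 < q)%N ->
  \sum_i \sum_j (f i != f j)%:R <=
    #|I|%:R ^+ 2 * johnson_inv q e
    + 2 * #|I|%:R * (1 - q%:R * e / (q%:R - 1)) * (\sum_i (f i != y0)%:R - #|I|%:R * e).
Proof.
move=> hq; have hq1 : q%:R - 1 != 0 :> R by rewrite gt_eqF // subr_gt0 ltr1n.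
set N := #|I|%:R; set d := \sum_i (f i != y0)%:R.
(* weights making [collisions_ge] tight when a fraction [e] of the [f i] differ from [y0] *)
pose tau := N * (1 - e); pose sig := N * e / (q%:R - 1).
pose w a := if a == y0 then tau else sig.
have sum_w : \sum_i w (f i) = N * tau - d * (tau - sig).
  rewrite (eq_bigr (fun i => tau - (f i != y0)%:R * (tau - sig))) => [|i _]; last first.
    by rewrite /w; case: (f i == y0) => /=; ring.
  by rewrite sumrB sumr_const -mulr_suml -mulr_natl.
have sum_w2 : \sum_a w a ^+ 2 = tau ^+ 2 + (q%:R - 1) * sig ^+ 2.
  rewrite (bigD1 y0) //= /w eqxx; congr (_ + _).
  rewrite (eq_bigr (fun _ => sig ^+ 2)) => [|a /negbTE-> //].
  by rewrite sumr_const cardC1 card_ord -[sig ^+ 2 *+ _]mulr_natl -subn1 natrB 1?ltnW.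
have sum_neq : \sum_i \sum_j (f i != f j)%:R = N ^+ 2 - \sum_i \sum_j (f i == f j)%:R.
  have -> : N ^+ 2 = \sum_(i : I) \sum_(j : I) 1.
    by rewrite sumr_const sumr_const -mulr_natr expr2.
  rewrite -sumrB; apply: eq_bigr => i _; rewrite -sumrB; apply: eq_bigr => j _.
  by case: (f i == f j); rewrite /= ?subrr ?subr0.
have := collisions_ge f w; rewrite sum_w sum_w2 sum_neq /johnson_inv => hA.
have -> : N ^+ 2 * (2 * e - q%:R * e ^+ 2 / (q%:R - 1))
    + 2 * N * (1 - q%:R * e / (q%:R - 1)) * (d - N * e)
  = N ^+ 2 - (2 * (N * tau - d * (tau - sig)) - (tau ^+ 2 + (q%:R - 1) * sig ^+ 2)).
  by rewrite /tau /sig; field.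
by rewrite lerD2l lerN2.
Qed.

Lemma sum_reldist_le (R : realFieldType) (I : finType) (q n : nat)
    (c : I -> word q n) (y : word q n) : (1 < q)%N ->
  \sum_i \sum_j reldist R (c i) (c j) <=
    #|I|%:R ^+ 2 * johnson_inv q ((\sum_i reldist R (c i) y) / #|I|%:R).
Proof.
move=> hq; set N := #|I|%:R; set e := _ / N.
have [n0|n_gt0] := posnP n.
  have reldist0 (x z : word q n) : reldist R x z = 0.
    by rewrite /reldist (_ : n%:R = 0) ?invr0 ?mulr0 // n0.
  rewrite big1 => [|i _]; last exact: big1.
  by rewrite /e big1 // mul0r /johnson_inv expr0n /= !mulr0 mul0r subrr mulr0.
have hn : 0 < n%:R :> R by rewrite ltr0n.
have sum_d : \sum_k \sum_i (c i k != y k)%:R = n%:R * (N * e) :> R.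
  have -> : N * e = \sum_i reldist R (c i) y.
    have [N0|/negPf Nnz] := eqVneq N 0; last by rewrite /e mulrC divfK ?Nnz.
    rewrite big_pred0 ?N0 ?mul0r // => i.
    have I0 : #|I| = 0%N by apply/eqP; rewrite -(pnatr_eq0 R) -/N N0.
    by have := card0_eq I0 i.
  rewrite exchange_big mulr_sumr; apply: eq_bigr => i _.
  by rewrite reldistE mulrC divfK ?gt_eqF.
have -> : \sum_i \sum_j reldist R (c i) (c j)
    = (\sum_k \sum_i \sum_j (c i k != c j k)%:R) / n%:R.
  rewrite [in RHS]exchange_big mulr_suml; apply: eq_bigr => i _.
  rewrite [in RHS]exchange_big mulr_suml; apply: eq_bigr => j _.
  by rewrite reldistE.
rewrite ler_pdivrMr //.
have tangent k := disagreements_le_tangent (fun i => c i k) (y k) e hq.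
apply: le_trans (ler_sum (index_enum _) (P := predT) (fun k _ => tangent k)) _.
rewrite big_split /= -[X in _ + X]mulr_sumr sumrB sum_d !sumr_const card_ord.
by rewrite -[(_ * e) *+ n]mulr_natl subrr mulr0 addr0 mulr_natr.
Qed.

Theorem theorem2p3 (R : rcfType) (q L n : nat) (C : {set word q n}) (delta : R) :
  (2 <= q)%N -> (2 <= L)%N ->
  (forall c : 'I_L -> word q n, injective c -> (forall i, c i \in C) ->
     delta <= (\sum_(i < L) \sum_(j < L | (i < j)%N) reldist R (c i) (c j))
              / ('C(L, 2))%:R) ->
  list_decodable C (Johnson q (delta - delta / L%:R)) L.-1.
Proof.
move=> hq hL hdelta y; set J := Johnson q _; set B := [set c in C | _].
rewrite leqNgt; apply/negP => hB.
have LB : (L <= #|B|)%N by lia.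
pose c (i : 'I_L) := enum_val (widen_ord LB i).
have c_inj : injective c by move=> i j /enum_val_inj/(congr1 val) /= /val_inj.
have /all_and2[cC cJ] i : c i \in C /\ reldist R (c i) y < J.
  by have := enum_valP (widen_ord LB i); rewrite inE => /andP.
have L_gt0 : 0 < L%:R :> R by rewrite ltr0n; lia.
have := hdelta c c_inj cC; set S := \sum_(i < L) _ => hS.
set e := (\sum_i reldist R (c i) y) / L%:R.
have e_lt : e < J.
  rewrite ltr_pdivrMr // mulr_natr.
  have -> : J *+ L = \sum_(i < L) J by rewrite sumr_const card_ord.
  apply: ltr_sum => [|i _]; last exact: cJ.
  by apply/hasP; exists (Ordinal (ltnW hL)); rewrite ?mem_index_enum.
have pairs : S *+ 2 <= L%:R ^+ 2 * johnson_inv q e.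
  have := sum_reldist_le R c y hq; rewrite card_ord sum_ord_pairs //.
  - by move=> i j; apply: reldistC.
  - by move=> i; apply: reldistxx.
have binom2 : ('C(L, 2))%:R *+ 2 = L%:R * (L%:R - 1) :> R.
  by rewrite -mulr_natr -natrM mulnC (mul_bin_left L 1) bin1 natrM natrB 1?mulrC //; lia.
have C_gt0 : 0 < ('C(L, 2))%:R :> R by rewrite ltr0n bin_gt0.
move: hS; rewrite ler_pdivlMr // => hS.
have : delta - delta / L%:R <= johnson_inv q e.
  rewrite -(ler_pM2l (exprn_gt0 2 L_gt0)); apply: le_trans pairs.
  have -> : L%:R ^+ 2 * (delta - delta / L%:R) = delta * ('C(L, 2))%:R * 2.
    by rewrite -mulrA mulr_natr binom2; field; rewrite gt_eqF.
  by rewrite -[S *+ 2]mulr_natr ler_pM2r.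
by rewrite leNgt johnson_inv_lt.
Qed.
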